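(* Let $V=x\partial_x+y\partial_y$ on $\mathrm{SL}(2,\mathbb R)$. (1) The only $\mathcal N$-invariant $V$-translators are the surfaces $\Sigma_{\theta_0}$ and the surfaces parametrized by $(s,t)\mapsto (t,y(s),\theta(s))$ with generating curve $\alpha(s)=(y(s),\theta(s))=\big(c(1+\cos(\sqrt2(s-s_0))),\,s\big)$, where $c>0$, $s_0\in\mathbb R$ (and $\frac{s-s_0}{\sqrt2}\in(-\frac\pi2,\frac\pi2)$). (2) The only $\mathcal A$-invariant $V$-translators are the surfaces $\Sigma_{\theta_0}$ and the surface $\Sigma_{x_0}$ with $x_0=0$. (3) Let $\Sigma$ be a rotational surface whose generating curve $\alpha(s)=(x(s),y(s))$ satisfies $x'=2y\cos\varphi$, $y'=2y\sin\varphi$. If $\Sigma$ is a $V$-translator, then $$\varphi'=-\frac{y\cos\varphi+x\sin\varphi}{y}.$$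
   Context: $\mathrm{SL}(2,\mathbb R)$ is given global coordinates $(x,y,\theta)\in\mathbb R\times(0,\infty)\times\mathbb R$ via $(x,y,\theta)\mapsto \begin{pmatrix}1&x\\0&1\end{pmatrix}\begin{pmatrix}\sqrt y&0\\0&1/\sqrt y\end{pmatrix}\begin{pmatrix}\cos\theta&\sin\theta\\-\sin\theta&\cos\theta\end{pmatrix}$, with the metric $\langle\,,\rangle=\frac{dx^2+dy^2}{4y^2}+\left(d\theta+\frac{dx}{2y}\right)^2$. Orthonormal frame: $e_1=2y\partial_x-\partial_\theta$, $e_2=2y\partial_y$, $e_3=\partial_\theta$; the Killing field $V=x\partial_x+y\partial_y$ equals $\frac{1}{2y}(xe_1+ye_2+xe_3)$. A surface with unit normal $N$ and mean curvature $H$ (average of principal curvatures w.r.t. $N$) is a $V$-translator if $H=\langle N,V\rangle$. $\mathcal N$-invariant surfaces: parametrized as $(s,t)\mapsto(t,y(s),\theta(s))$; $N=\frac{y'}{\sqrt2\Phi}(e_1-e_3)+\frac{\sqrt2 y\theta'}{\Phi}e_2$, $H=\frac{\sqrt2 y^2}{\Phi^3}(\theta'y''-y'\theta''+2y\theta'^3)$, $\Phi=\sqrt{y'^2+2y^2\theta'^2}$. $\mathcal A$-invariant surfaces: parametrized as $(s,t)\mapsto(x(s),t,\theta(s))$, $t>0$; $N=\frac1\Phi(-(x'+2t\theta')e_1+x'e_3)$, $H=\frac{2t^2}{\Phi^3}(x'\theta''-\theta'x'')$, $\Phi=\sqrt{(x'+2t\theta')^2+x'^2}$. Rotational surfaces: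 parametrized as $(s,t)\mapsto(x(s),y(s),t)$; when $x'=2y\cos\varphi$, $y'=2y\sin\varphi$, $N=-\sin\varphi\,e_1+\cos\varphi\,e_2$ and $H=\frac{\varphi'}{2}+\cos\varphi$. $\Sigma_{x_0}=\{x=x_0\}$, $\Sigma_{\theta_0}=\{\theta=\theta_0\}$ for constants $x_0,\theta_0$. *)

From Stdlib Require Import Reals.
From Coquelicot Require Import Coquelicot.
Open Scope R_scope.

(** Tangent vectors of SL(2,R) are written by their components in the
    orthonormal frame (e1, e2, e3); the metric is then the Euclidean dot
    product of the components. *)
Definition vec3 : Type := (R * R * R)%type.

Definition dot3 (u v : vec3) : R :=
  let '(u1, u2, u3) := u in let '(v1, v2, v3) := v in u1 * v1 + u2 * v2 + u3 * v3.

(** The Killing field V = x d_x + y d_y = (1/(2y)) (x e1 + y e2 + x e3)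
    at the point with coordinates (x, y, theta). *)
Definition Vfield (x y : R) : vec3 := (x / (2 * y), y / (2 * y), x / (2 * y)).

Definition inI (a b : Rbar) (s : R) : Prop := Rbar_lt a s /\ Rbar_lt s b.

(** ---------- N-invariant surfaces (s,t) |-> (t, y(s), theta(s)) ---------- *)
Definition PhiN (y th : R -> R) (s : R) : R :=
  sqrt (Derive y s ^ 2 + 2 * y s ^ 2 * Derive th s ^ 2).

Definition NormalN (y th : R -> R) (s : R) : vec3 :=
  ( Derive y s / (sqrt 2 * PhiN y th s),
    sqrt 2 * y s * Derive th s / PhiN y th s,
    - (Derive y s / (sqrt 2 * PhiN y th s)) ).

Definition HN (y th : R -> R) (s : R) : R :=
  sqrt 2 * y s ^ 2 / PhiN y th s ^ 3 *
  (Derive th s * Derive (Derive y) s - Derive y s * Derive (Derive th) s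
   + 2 * y s * Derive th s ^ 3).

Definition regularN (a b : Rbar) (y th : R -> R) : Prop :=
  forall s, inI a b s ->
    ex_derive y s /\ ex_derive (Derive y) s /\
    ex_derive th s /\ ex_derive (Derive th) s /\
    0 < y s /\ 0 < PhiN y th s.

Definition translatorN (a b : Rbar) (y th : R -> R) : Prop :=
  forall s t, inI a b s -> HN y th s = dot3 (NormalN y th s) (Vfield t (y s)).

(** ---------- A-invariant surfaces (s,t) |-> (x(s), t, theta(s)), t > 0 ---------- *)
Definition PhiA (x th : R -> R) (s t : R) : R :=
  sqrt ((Derive x s + 2 * t * Derive th s) ^ 2 + Derive x s ^ 2).

Definition NormalA (x th : R -> R) (s t : R) : vec3 :=
  ( - (Derive x s + 2 * t * Derive th s) / PhiA x th s t,
    0,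
    Derive x s / PhiA x th s t ).

Definition HA (x th : R -> R) (s t : R) : R :=
  2 * t ^ 2 / PhiA x th s t ^ 3 *
  (Derive x s * Derive (Derive th) s - Derive th s * Derive (Derive x) s).

Definition regularA (a b : Rbar) (x th : R -> R) : Prop :=
  forall s, inI a b s ->
    ex_derive x s /\ ex_derive (Derive x) s /\
    ex_derive th s /\ ex_derive (Derive th) s /\
    (forall t, 0 < t -> 0 < PhiA x th s t).

Definition translatorA (a b : Rbar) (x th : R -> R) : Prop :=
  forall s t, inI a b s -> 0 < t ->
    HA x th s t = dot3 (NormalA x th s t) (Vfield (x s) t).

(** ---------- Rotational surfaces (s,t) |-> (x(s), y(s), t) ---------- *)
(** With x' = 2y cos phi, y' = 2y sin phi:
    N = -sin phi e1 + cos phi e2,  H = phi'/2 + cos phi. *)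
Definition NormalR (phi : R -> R) (s : R) : vec3 := (- sin (phi s), cos (phi s), 0).

Definition HR (phi : R -> R) (s : R) : R := Derive phi s / 2 + cos (phi s).

Definition translatorR (a b : Rbar) (x y phi : R -> R) : Prop :=
  forall s (t : R), inI a b s -> HR phi s = dot3 (NormalR phi s) (Vfield (x s) (y s)).

From Stdlib Require Import Reals Lra Classical.
From Coquelicot Require Import Coquelicot.
Open Scope R_scope.

(** For N-invariant surfaces <N, V> = y th' / (sqrt 2 Phi), so being a V-translator is the
    ODE  2 y (th' y'' - y' th'' + 2 y th'^3) = th' Phi^2.  Where th' <> 0, put w = sqrt y and
    u = th / sqrt 2: the ODE becomes w_uu = - w, so w cos u - w_u sin u and w sin u + w_u cos u
    are first integrals and w = R cos (u - u0), i.e. y = R^2/2 (1 + cos (sqrt 2 (th - s0))).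
    The quantity 4 y th'^2 / (y'^2 + 4 y th'^2 + 2 y^2 th'^2) = 2 / (2 + w^2 + w_u^2) is a first
    integral on the whole interval vanishing exactly where th' does, so th' is either identically
    zero or never zero.
    For A-invariant surfaces the translator equation is a polynomial identity in t > 0; its
    coefficients force th' x = 0 and x' th'' - th' x'' = 0, so (x', th') has a constant direction:
    either th is constant, or th' never vanishes and x = 0.
    For rotational surfaces H = <N, V> is simply solved for phi'. *)

Lemma sqrt2_pos : 0 < sqrt 2.
Proof. apply sqrt_lt_R0; lra. Qed.

Lemma sqrt2_sqr : sqrt 2 * sqrt 2 = 2.
Proof. apply sqrt_sqrt; lra. Qed.

Lemma inI_locally a b s : inI a b s -> locally s (inI a b).
Proof.
  intros [Ha Hb].
  generalize (filter_and _ _ (open_Rbar_gt' s a Ha) (open_Rbar_lt' s b Hb)).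
  apply filter_imp. intros u [? ?]; split; assumption.
Qed.

Lemma inI_between a b s1 s2 u : inI a b s1 -> inI a b s2 ->
  Rmin s1 s2 <= u <= Rmax s1 s2 -> inI a b u.
Proof.
  intros [A1 B1] [A2 B2] [H1 H2]; split.
  - destruct a as [a| |]; simpl in *; auto.
    apply Rlt_le_trans with (Rmin s1 s2); auto.
    unfold Rmin; destruct Rle_dec; lra.
  - destruct b as [b| |]; simpl in *; auto.
    apply Rle_lt_trans with (Rmax s1 s2); auto.
    unfold Rmax; destruct Rle_dec; lra.
Qed.

Lemma is_derive_0_const_on a b (f : R -> R) :
  (forall s, inI a b s -> is_derive f s 0) ->
  forall s1 s2, inI a b s1 -> inI a b s2 -> f s1 = f s2.
Proof.
  intros Hd s1 s2 I1 I2.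
  destruct (MVT_gen f s1 s2 (fun _ => 0)) as [c [_ Hc]].
  - intros u Hu. apply Hd, (inI_between a b s1 s2); auto; lra.
  - intros u Hu.
    apply continuity_pt_filterlim, (ex_derive_continuous (K := R_AbsRing) (V := R_NormedModule)).
    exists 0. apply Hd, (inI_between a b s1 s2); auto.
  - lra.
Qed.

Lemma const_or_Derive_neq0 a b (f : R -> R) :
  (forall s, inI a b s -> ex_derive f s) ->
  (exists c, forall s, inI a b s -> f s = c) \/ (exists s1, inI a b s1 /\ Derive f s1 <> 0).
Proof.
  intros Hf.
  destruct (classic (exists s1, inI a b s1 /\ Derive f s1 <> 0)) as [|Hno]; [now right | left].
  destruct (classic (exists s0, inI a b s0)) as [[s0 Hs0]|Hempty].
  - exists (f s0). intros s Hs. apply (is_derive_0_const_on a b); auto.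
    intros u Hu. replace 0 with (Derive f u).
    + now apply Derive_correct, Hf.
    + apply NNPP. intros Hne. apply Hno. exists u. auto.
  - exists 0. intros s Hs. elim Hempty. now exists s.
Qed.

Lemma Derive_locally_const (f : R -> R) c s :
  locally s (fun u => f u = c) -> Derive f s = 0.
Proof. intros H. rewrite (Derive_ext_loc f (fun _ => c)) by exact H. apply Derive_const. Qed.

Lemma Derive_const_on a b (f : R -> R) c s :
  (forall u, inI a b u -> f u = c) -> inI a b s -> Derive f s = 0.
Proof.
  intros Hf Hs. apply (Derive_locally_const f c).
  generalize (inI_locally a b s Hs). apply filter_imp, Hf.
Qed.

Lemma Derive2_const_on a b (f : R -> R) c s :
  (forall u, inI a b u -> f u = c) -> inI a b s -> Derive (Derive f) s = 0.
Proof.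
  intros Hf Hs. apply (Derive_const_on a b _ 0); auto.
  intros u Hu. now apply (Derive_const_on a b f c).
Qed.

Lemma continuous_locally_neq0 (f : R -> R) s :
  continuous f s -> f s <> 0 -> locally s (fun u => f u <> 0).
Proof.
  intros Hc Hn. apply (Hc (fun v => v <> 0)).
  assert (Hp : 0 < Rabs (f s)) by now apply Rabs_pos_lt.
  exists (mkposreal _ Hp). intros v Hv ->.
  change (Rabs (0 - f s) < Rabs (f s)) in Hv.
  rewrite Rminus_0_l, Rabs_Ropp in Hv. lra.
Qed.

Lemma continuous_avoid_lt a b (g : R -> R) c s1 s :
  (forall u, inI a b u -> continuous g u) -> (forall u, inI a b u -> g u <> c) ->
  inI a b s1 -> inI a b s -> g s1 < c -> g s < c.
Proof.
  intros Hc Hne H1 H Hlt.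
  destruct (Rtotal_order (g s) c) as [|[E|Hgt]]; [assumption | now elim (Hne s H) |].
  assert (Hcont : forall u, Rmin s1 s <= u <= Rmax s1 s -> continuity_pt g u).
  { intros u Hu. apply continuity_pt_filterlim, Hc, (inI_between a b s1 s); auto. }
  assert (Hz : exists z, Rmin s1 s <= z <= Rmax s1 s /\ g z = c).
  { destruct (Rtotal_order s1 s) as [Hs|[->|Hs]]; [| lra |].
    - rewrite Rmin_left, Rmax_right in * by lra.
      destruct (Ranalysis5.IVT_interv (fun u => g u - c) s1 s) as [z [Hz Ez]]; try lra.
      + intros u Hu. apply continuity_pt_minus, continuity_pt_const; auto. now intros ? ?.
      + exists z. split; [assumption | lra].
    - rewrite Rmin_right, Rmax_left in * by lra.
      destruct (Ranalysis5.IVT_interv (fun u => c - g u) s s1) as [z [Hz Ez]]; try lra.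
      + intros u Hu. apply continuity_pt_minus; auto. apply continuity_pt_const. now intros ? ?.
      + exists z. split; [assumption | lra]. }
  destruct Hz as [z [Hz Ez]].
  elim (Hne z); auto. apply (inI_between a b s1 s); auto.
Qed.

Lemma continuous_cos_pos_range a b (g : R -> R) s1 :
  (forall s, inI a b s -> continuous g s) -> (forall s, inI a b s -> 0 < cos (g s)) ->
  inI a b s1 -> - (PI / 2) < g s1 < PI / 2 ->
  forall s, inI a b s -> - (PI / 2) < g s < PI / 2.
Proof.
  intros Hc Hcos H1 [Hlo Hhi] s Hs. split.
  - enough (- g s < PI / 2) by lra.
    apply (continuous_avoid_lt a b (fun u => - g u) _ s1); auto; try lra.
    + intros u Hu. apply (continuous_opp g), Hc, Hu.
    + intros u Hu E. specialize (Hcos u Hu).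
      rewrite <- (Ropp_involutive (g u)), E, cos_neg, cos_PI2 in Hcos. lra.
  - apply (continuous_avoid_lt a b g _ s1); auto.
    intros u Hu E. specialize (Hcos u Hu). rewrite E, cos_PI2 in Hcos. lra.
Qed.

Lemma quadratic_coeffs_eq0 c2 c1 c0 :
  (forall t, 0 < t -> c2 * t ^ 2 + c1 * t + c0 = 0) -> c2 = 0 /\ c1 = 0 /\ c0 = 0.
Proof.
  intros H. generalize (H 1 ltac:(lra)) (H 2 ltac:(lra)) (H 3 ltac:(lra)). lra.
Qed.

Lemma cos_shift_combination r k : 0 < r ->
  exists R0 be, 0 < R0 /\ - (PI / 2) < be < PI / 2 /\
    forall u, r * cos u + k * sin u = R0 * cos (u - be).
Proof.
  intros Hr. set (z := k / r).
  assert (HQ : 0 < sqrt (1 + z²)) by (apply sqrt_lt_R0; generalize (Rle_0_sqr z); lra).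
  exists (r * sqrt (1 + z²)), (atan z). split; [now apply Rmult_lt_0_compat | split].
  - generalize (atan_bound z). lra.
  - assert (Hk : k = z * r) by (unfold z; field; lra).
    intros u. rewrite cos_minus, cos_atan, sin_atan, Hk. field. lra.
Qed.

Lemma wronskian0_parallel a b (f g : R -> R) :
  (forall s, inI a b s ->
     ex_derive f s /\ ex_derive g s /\ 0 < f s ^ 2 + g s ^ 2 /\
     f s * Derive g s - g s * Derive f s = 0) ->
  forall s1 s, inI a b s1 -> inI a b s -> f s * g s1 = g s * f s1.
Proof.
  intros H s1 s H1 Hs.
  set (k := fun u => (f u * g s1 - g u * f s1) / sqrt (f u ^ 2 + g u ^ 2)).
  assert (Hk : k s = k s1).
  { apply (is_derive_0_const_on a b k); auto. intros u Hu.
    destruct (H u Hu) as (Hf & Hg & Hpos & W).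
    assert (HS : 0 < sqrt (f u ^ 2 + g u ^ 2)) by now apply sqrt_lt_R0.
    assert (HS2 := sqrt_sqrt (f u ^ 2 + g u ^ 2) ltac:(lra)).
    unfold k. auto_derive;
      replace (f u * (f u * 1) + g u * (g u * 1)) with (f u ^ 2 + g u ^ 2) by ring.
    - repeat split; auto. lra.
    - change (Derive (fun x => f x) u) with (Derive f u).
      change (Derive (fun x => g x) u) with (Derive g u).
      set (S := sqrt (f u ^ 2 + g u ^ 2)) in *.
      transitivity (((Derive f u * g s1 - Derive g u * f s1) * (S * S)
                     - (f u * g s1 - g u * f s1) * (f u * Derive f u + g u * Derive g u))
                    / (S * S * S)).
      + field. lra.
      + rewrite HS2.
        replace (_ - _) with (- (f u * Derive g u - g u * Derive f u) * (f u * f s1 + g u * g s1))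
          by ring.
        rewrite W. unfold Rdiv. ring. }
  assert (HS : 0 < sqrt (f s ^ 2 + g s ^ 2)) by (apply sqrt_lt_R0; apply H; assumption).
  unfold k in Hk. replace ((f s1 * g s1 - g s1 * f s1) / _) with 0 in Hk by (unfold Rdiv; ring).
  apply Rmult_eq_reg_r with (/ sqrt (f s ^ 2 + g s ^ 2)).
  - unfold Rdiv in Hk. lra.
  - apply Rinv_neq_0_compat. lra.
Qed.

Lemma rotation_invariants_derive (w m U : R -> R) (s dw dm dU : R) :
  is_derive w s dw -> is_derive m s dm -> is_derive U s dU ->
  dw = m s * dU -> dm = - w s * dU ->
  is_derive (fun u => w u * cos (U u) - m u * sin (U u)) s 0 /\
  is_derive (fun u => w u * sin (U u) + m u * cos (U u)) s 0.
Proof.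
  intros Hw Hm HU Ew Em.
  split; auto_derive; try (repeat split; eexists; eassumption);
    change (Derive (fun x => w x) s) with (Derive w s);
    change (Derive (fun x => m x) s) with (Derive m s);
    change (Derive (fun x => U x) s) with (Derive U s);
    rewrite (is_derive_unique _ _ _ Hw), (is_derive_unique _ _ _ Hm),
      (is_derive_unique _ _ _ HU), Ew, Em; ring.
Qed.

Lemma PhiN_sqr y th s : PhiN y th s ^ 2 = Derive y s ^ 2 + 2 * y s ^ 2 * Derive th s ^ 2.
Proof.
  apply pow2_sqrt.
  generalize (pow2_ge_0 (Derive y s)) (pow2_ge_0 (y s * Derive th s)). intros. nra.
Qed.

Definition translator_odeN (y th : R -> R) (s : R) : Prop :=
  2 * y s * (Derive th s * Derive (Derive y) s - Derive y s * Derive (Derive th) s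
             + 2 * y s * Derive th s ^ 3)
  = Derive th s * (Derive y s ^ 2 + 2 * y s ^ 2 * Derive th s ^ 2).

Lemma translatorN_at_iff y th s t : 0 < y s -> 0 < PhiN y th s ->
  HN y th s = dot3 (NormalN y th s) (Vfield t (y s)) <-> translator_odeN y th s.
Proof.
  intros Hy HP. unfold translator_odeN, HN. rewrite <- PhiN_sqr.
  assert (Hdot : dot3 (NormalN y th s) (Vfield t (y s)) =
    sqrt 2 * y s ^ 2 / PhiN y th s ^ 3 * (Derive th s * PhiN y th s ^ 2 / (2 * y s))).
  { unfold dot3, NormalN, Vfield. generalize sqrt2_pos. intros. field. lra. }
  assert (Hfactor : sqrt 2 * y s ^ 2 / PhiN y th s ^ 3 <> 0).
  { apply Rgt_not_eq, Rdiv_lt_0_compat, pow_lt; auto.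
    apply Rmult_lt_0_compat, pow_lt; auto. exact sqrt2_pos. }
  rewrite Hdot. split; intros E.
  - apply Rmult_eq_reg_l in E; [| exact Hfactor]. rewrite E. field. lra.
  - f_equal. rewrite <- E. field. lra.
Qed.

Lemma theta_const_translatorN a b y th th0 :
  regularN a b y th -> (forall s, inI a b s -> th s = th0) -> translatorN a b y th.
Proof.
  intros Hreg Hth s t Hs. destruct (Hreg s Hs) as (_ & _ & _ & _ & Hy & HP).
  apply translatorN_at_iff; auto. unfold translator_odeN.
  rewrite (Derive_const_on a b th th0 s), (Derive2_const_on a b th th0 s); auto. ring.
Qed.

Lemma one_plus_cos_pos u : - PI < u < PI -> 0 < 1 + cos u.
Proof.
  intros H. replace u with (2 * (u / 2)) by field. rewrite cos_2a_cos.
  assert (0 < cos (u / 2)) by (apply cos_gt_0; lra). nra.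
Qed.

Lemma model_curve_translatorN c s0 : 0 < c ->
  let a := Finite (s0 - PI / sqrt 2) in
  let b := Finite (s0 + PI / sqrt 2) in
  let y := fun s => c * (1 + cos (sqrt 2 * (s - s0))) in
  let th := fun s : R => s in
  regularN a b y th /\ translatorN a b y th.
Proof.
  intros Hc a b y th.
  assert (R2 := sqrt2_pos).
  assert (Dy : forall s, is_derive y s (- c * sqrt 2 * sin (sqrt 2 * (s - s0)))).
  { intros s. unfold y. auto_derive; auto. unfold Rminus. ring. }
  assert (Dy2 : forall s, is_derive (Derive y) s (- 2 * c * cos (sqrt 2 * (s - s0)))).
  { intros s. apply is_derive_ext with (fun s => - c * sqrt 2 * sin (sqrt 2 * (s - s0))).
    - intros u. symmetry. apply is_derive_unique, Dy.
    - auto_derive; auto. unfold Rminus.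
      replace (-2 * c) with (- c * (sqrt 2 * sqrt 2)) by (rewrite sqrt2_sqr; ring). ring. }
  assert (Dth : forall s, is_derive th s 1) by (intros s; unfold th; auto_derive; auto).
  assert (Dth2 : forall s, is_derive (Derive th) s 0).
  { intros s. apply is_derive_ext with (fun _ => 1).
    - intros u. symmetry. apply is_derive_unique, Dth.
    - auto_derive; auto. }
  assert (Ypos : forall s, inI a b s -> 0 < y s).
  { intros s [H1 H2]. unfold a, b in *; simpl in *. unfold y.
    apply Rmult_lt_0_compat, one_plus_cos_pos; auto.
    assert (E : PI = sqrt 2 * (PI / sqrt 2)) by (field; lra).
    set (K := PI / sqrt 2) in *. rewrite E. split; nra. }
  assert (Hode : forall s, translator_odeN y th s).
  { intros s. unfold translator_odeN.
    rewrite (is_derive_unique _ _ _ (Dy s)), (is_derive_unique _ _ _ (Dy2 s)),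
      (is_derive_unique _ _ _ (Dth s)), (is_derive_unique _ _ _ (Dth2 s)).
    unfold y. set (u := sqrt 2 * (s - s0)).
    assert (Hsin : (- c * sqrt 2 * sin u) ^ 2 = 2 * c ^ 2 * (1 - cos u ^ 2)).
    { rewrite <- (sin2_cos2 u). unfold Rsqr.
      transitivity (c ^ 2 * (sqrt 2 * sqrt 2) * (sin u * sin u)); [ring|].
      rewrite sqrt2_sqr. ring. }
    rewrite Hsin. ring. }
  assert (Speed : forall s, inI a b s -> 0 < PhiN y th s).
  { intros s Hs. unfold PhiN. apply sqrt_lt_R0.
    rewrite (is_derive_unique _ _ _ (Dth s)). specialize (Ypos s Hs). nra. }
  split.
  - intros s Hs. repeat split; auto; eexists; eauto.
  - intros s t Hs. apply translatorN_at_iff; auto.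
Qed.

Definition ZN (y th : R -> R) (s : R) : R :=
  4 * y s * Derive th s ^ 2 /
  (Derive y s ^ 2 + 4 * y s * Derive th s ^ 2 + 2 * y s ^ 2 * Derive th s ^ 2).

(* dw/du, with w = sqrt y and u = th / sqrt 2 *)
Definition slopeN (y th : R -> R) (s : R) : R :=
  Derive y s / (sqrt 2 * sqrt (y s) * Derive th s).

Section TranslatorNClassification.

Variables (a b : Rbar) (y th : R -> R).
Hypotheses (Hreg : regularN a b y th) (Htr : translatorN a b y th).

Lemma regularN_speed s : inI a b s ->
  0 < Derive y s ^ 2 + 2 * y s ^ 2 * Derive th s ^ 2.
Proof.
  intros Hs. destruct (Hreg s Hs) as (_ & _ & _ & _ & _ & HP).
  rewrite <- PhiN_sqr. now apply pow_lt.
Qed.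

Lemma translatorN_ode s : inI a b s -> translator_odeN y th s.
Proof.
  intros Hs. destruct (Hreg s Hs) as (_ & _ & _ & _ & Hy & HP).
  apply (translatorN_at_iff y th s 0); auto.
Qed.

Lemma ZN_derive0 s : inI a b s -> is_derive (ZN y th) s 0.
Proof.
  intros Hs. destruct (Hreg s Hs) as (Hy & Hy2 & Ht & Ht2 & Hypos & _).
  assert (E := translatorN_ode s Hs). assert (Hv := regularN_speed s Hs).
  unfold translator_odeN in E.
  assert (Dpos : 0 < Derive y s ^ 2 + 4 * y s * Derive th s ^ 2
                     + 2 * y s ^ 2 * Derive th s ^ 2).
  { generalize (pow2_ge_0 (Derive th s)). nra. }
  unfold ZN. auto_derive.
  - repeat split; auto. apply Rgt_not_eq. eapply Rlt_le_trans; [exact Dpos | right; ring].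
  - change (Derive (fun x => Derive y x) s) with (Derive (Derive y) s).
    change (Derive (fun x => Derive th x) s) with (Derive (Derive th) s).
    change (Derive (fun x => y x) s) with (Derive y s).
    change (Derive (fun x => th x) s) with (Derive th s).
    set (p := Derive th s) in *. set (q := Derive (Derive th) s) in *.
    set (a' := Derive y s) in *. set (b' := Derive (Derive y) s) in *.
    set (Y := y s) in *.
    transitivity (- (4 * a' * p * (2 * Y * (p * b' - a' * q + 2 * Y * p ^ 3)
                                    - p * (a' ^ 2 + 2 * Y ^ 2 * p ^ 2)))
                  / (a' ^ 2 + 4 * Y * p ^ 2 + 2 * Y ^ 2 * p ^ 2) ^ 2).
    + field. apply Rgt_not_eq. eapply Rlt_le_trans; [exact Dpos | right; ring].
    + rewrite E. unfold Rdiv. ring.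
Qed.

Lemma Derive_th_neq0_on s1 : inI a b s1 -> Derive th s1 <> 0 ->
  forall s, inI a b s -> Derive th s <> 0.
Proof.
  intros H1 Hp1 s Hs Hp.
  assert (EZ : ZN y th s = ZN y th s1)
    by (apply (is_derive_0_const_on a b); auto; exact ZN_derive0).
  assert (Z0 : ZN y th s = 0) by (unfold ZN; rewrite Hp; unfold Rdiv; ring).
  assert (Zpos : 0 < ZN y th s1).
  { destruct (Hreg s1 H1) as (_ & _ & _ & _ & Hy & _).
    assert (Hp2 := pow2_gt_0 _ Hp1). assert (Hy2 := pow2_ge_0 (Derive y s1)).
    unfold ZN. apply Rdiv_lt_0_compat; nra. }
  lra.
Qed.

Lemma slopeN_derive s : inI a b s -> Derive th s <> 0 ->
  is_derive (slopeN y th) s (- sqrt (y s) * Derive th s / sqrt 2).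
Proof.
  intros Hs Hp. destruct (Hreg s Hs) as (Hy & Hy2 & Ht & Ht2 & Hypos & _).
  assert (E := translatorN_ode s Hs). unfold translator_odeN in E.
  assert (Hr : 0 < sqrt (y s)) by now apply sqrt_lt_R0.
  assert (R2 := sqrt2_pos).
  assert (Eb : Derive (Derive y) s =
    (Derive y s ^ 2 + 2 * y s ^ 2 * Derive th s ^ 2) / (2 * y s)
    + Derive y s * Derive (Derive th) s / Derive th s - 2 * y s * Derive th s ^ 2).
  { apply Rmult_eq_reg_l with (2 * y s * Derive th s).
    - field_simplify; [lra | lra].
    - apply Rmult_integral_contrapositive_currified; lra. }
  unfold slopeN. auto_derive.
  - repeat split; auto; try lra.
    repeat apply Rmult_integral_contrapositive_currified; lra.
  - change (Derive (fun x => Derive y x) s) with (Derive (Derive y) s).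
    change (Derive (fun x => Derive th x) s) with (Derive (Derive th) s).
    change (Derive (fun x => y x) s) with (Derive y s).
    change (Derive (fun x => th x) s) with (Derive th s).
    rewrite Eb. set (r := sqrt (y s)) in *.
    rewrite <- (sqrt_sqrt (y s)) by lra. fold r.
    field. repeat split; lra.
Qed.

Lemma sqrt_y_harmonic s1 : inI a b s1 -> Derive th s1 <> 0 ->
  forall s, inI a b s ->
    sqrt (y s) = sqrt (y s1) * cos ((th s - th s1) / sqrt 2)
                 + slopeN y th s1 * sin ((th s - th s1) / sqrt 2).
Proof.
  intros H1 Hp1.
  set (U := fun u => (th u - th s1) / sqrt 2).
  set (A := fun u => sqrt (y u) * cos (U u) - slopeN y th u * sin (U u)).
  set (B := fun u => sqrt (y u) * sin (U u) + slopeN y th u * cos (U u)).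
  assert (Hinv : forall u, inI a b u -> is_derive A u 0 /\ is_derive B u 0).
  { intros u Hu. assert (Hp := Derive_th_neq0_on s1 H1 Hp1 u Hu).
    destruct (Hreg u Hu) as (Hy & _ & Ht & _ & Hypos & _).
    assert (Hr : 0 < sqrt (y u)) by now apply sqrt_lt_R0.
    assert (R2 := sqrt2_pos).
    apply (rotation_invariants_derive (fun u => sqrt (y u)) (slopeN y th) U u
             (Derive y u / (2 * sqrt (y u))) (- sqrt (y u) * Derive th u / sqrt 2)
             (Derive th u / sqrt 2)).
    - auto_derive; auto. change (Derive (fun x => y x) u) with (Derive y u). field. lra.
    - now apply slopeN_derive.
    - unfold U. auto_derive; auto.
      change (Derive (fun x => th x) u) with (Derive th u). field. lra.
    - unfold slopeN.
      replace (2 * sqrt (y u)) with (sqrt 2 * sqrt 2 * sqrt (y u)) by (rewrite sqrt2_sqr; ring).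
      field. repeat split; lra.
    - unfold Rdiv. ring. }
  intros s Hs.
  assert (EA : A s = A s1)
    by (apply (is_derive_0_const_on a b); auto; intros u Hu; apply Hinv, Hu).
  assert (EB : B s = B s1)
    by (apply (is_derive_0_const_on a b); auto; intros u Hu; apply Hinv, Hu).
  assert (U1 : U s1 = 0) by (unfold U; unfold Rdiv; ring).
  transitivity (A s * cos (U s) + B s * sin (U s)).
  - unfold A, B. rewrite <- (Rmult_1_r (sqrt (y s))) at 1. rewrite <- (sin2_cos2 (U s)).
    unfold Rsqr. ring.
  - rewrite EA, EB. unfold A, B. rewrite U1, cos_0, sin_0. unfold U. ring.
Qed.

Lemma translatorN_model_profile s1 : inI a b s1 -> Derive th s1 <> 0 ->
  exists c s0 : R, 0 < c /\
    forall s, inI a b s ->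
      - (PI / 2) < (th s - s0) / sqrt 2 < PI / 2 /\
      y s = c * (1 + cos (sqrt 2 * (th s - s0))).
Proof.
  intros H1 Hp1. assert (R2 := sqrt2_pos).
  assert (Hr1 : 0 < sqrt (y s1)) by (apply sqrt_lt_R0, Hreg, H1).
  destruct (cos_shift_combination (sqrt (y s1)) (slopeN y th s1) Hr1)
    as (R0 & be & HR0 & Hbe & Hshift).
  set (s0 := th s1 + sqrt 2 * be).
  assert (Hv : forall s, (th s - s0) / sqrt 2 = (th s - th s1) / sqrt 2 - be)
    by (intros s; unfold s0; field; lra).
  assert (Hw : forall s, inI a b s -> sqrt (y s) = R0 * cos ((th s - s0) / sqrt 2)).
  { intros s Hs. rewrite Hv, <- Hshift. now apply sqrt_y_harmonic. }
  assert (Hrange : forall s, inI a b s -> - (PI / 2) < (th s - s0) / sqrt 2 < PI / 2).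
  { apply (continuous_cos_pos_range a b _ s1); auto.
    - intros s Hs. apply (ex_derive_continuous (K := R_AbsRing) (V := R_NormedModule)).
      destruct (Hreg s Hs) as (_ & _ & Ht & _). auto_derive; repeat split; auto; lra.
    - intros s Hs. assert (Hr : 0 < sqrt (y s)) by (apply sqrt_lt_R0, Hreg, Hs).
      rewrite Hw in Hr by exact Hs. nra.
    - rewrite Hv. replace ((th s1 - th s1) / sqrt 2) with 0 by (field; lra). lra. }
  exists (R0 ^ 2 / 2), s0. split; [apply Rdiv_lt_0_compat; [apply pow_lt |]; lra |].
  intros s Hs. split; [now apply Hrange |].
  rewrite <- (pow2_sqrt (y s)) by (apply Rlt_le, Hreg, Hs).
  rewrite Hw by exact Hs.
  replace (sqrt 2 * (th s - s0)) with (sqrt 2 * sqrt 2 * ((th s - s0) / sqrt 2))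
    by (field; lra).
  rewrite sqrt2_sqr, cos_2a_cos. field.
Qed.
End TranslatorNClassification.

Lemma translatorN_classification a b y th :
  regularN a b y th -> translatorN a b y th ->
  (exists th0 : R, forall s, inI a b s -> th s = th0) \/
  (exists c s0 : R, 0 < c /\
     forall s, inI a b s ->
       - (PI / 2) < (th s - s0) / sqrt 2 < PI / 2 /\
       y s = c * (1 + cos (sqrt 2 * (th s - s0)))).
Proof.
  intros Hreg Htr.
  destruct (const_or_Derive_neq0 a b th) as [Hconst | (s1 & H1 & Hp1)].
  - intros s Hs. apply Hreg, Hs.
  - now left.
  - right. now apply (translatorN_model_profile a b y th Hreg Htr s1).
Qed.

Lemma PhiA_sqr x th s t :
  PhiA x th s t ^ 2 = (Derive x s + 2 * t * Derive th s) ^ 2 + Derive x s ^ 2.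
Proof.
  apply pow2_sqrt.
  generalize (pow2_ge_0 (Derive x s + 2 * t * Derive th s)) (pow2_ge_0 (Derive x s)). lra.
Qed.

Lemma translatorA_at_iff x th s t : 0 < t -> 0 < PhiA x th s t ->
  HA x th s t = dot3 (NormalA x th s t) (Vfield (x s) t) <->
  2 * t ^ 2 * (Derive x s * Derive (Derive th) s - Derive th s * Derive (Derive x) s)
  = - Derive th s * x s * ((Derive x s + 2 * t * Derive th s) ^ 2 + Derive x s ^ 2).
Proof.
  intros Ht HP. unfold HA. rewrite <- PhiA_sqr.
  assert (Hdot : dot3 (NormalA x th s t) (Vfield (x s) t) =
    2 * t ^ 2 / PhiA x th s t ^ 3 * (- Derive th s * x s * PhiA x th s t ^ 2 / (2 * t ^ 2))).
  { unfold dot3, NormalA, Vfield. field. lra. }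
  assert (Hfactor : 2 * t ^ 2 / PhiA x th s t ^ 3 <> 0).
  { apply Rgt_not_eq, Rdiv_lt_0_compat; [apply Rmult_lt_0_compat; [lra |] |];
      now apply pow_lt. }
  rewrite Hdot. split; intros E.
  - apply Rmult_eq_reg_l in E; [| exact Hfactor]. rewrite E. field. lra.
  - f_equal. rewrite <- E. field. lra.
Qed.

Lemma theta_const_translatorA a b x th th0 :
  regularA a b x th -> (forall s, inI a b s -> th s = th0) -> translatorA a b x th.
Proof.
  intros Hreg Hth s t Hs Ht. destruct (Hreg s Hs) as (_ & _ & _ & _ & HP).
  apply translatorA_at_iff; auto.
  rewrite (Derive_const_on a b th th0 s), (Derive2_const_on a b th th0 s); auto. ring.
Qed.

Lemma x_zero_translatorA a b x th :
  regularA a b x th -> (forall s, inI a b s -> x s = 0) -> translatorA a b x th.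
Proof.
  intros Hreg Hx s t Hs Ht. destruct (Hreg s Hs) as (_ & _ & _ & _ & HP).
  apply translatorA_at_iff; auto.
  rewrite (Derive_const_on a b x 0 s), (Derive2_const_on a b x 0 s), (Hx s Hs); auto. ring.
Qed.

Section TranslatorAClassification.

Variables (a b : Rbar) (x th : R -> R).
Hypotheses (Hreg : regularA a b x th) (Htr : translatorA a b x th).

Lemma regularA_speed s : inI a b s -> 0 < Derive x s ^ 2 + Derive th s ^ 2.
Proof.
  intros Hs. destruct (Hreg s Hs) as (_ & _ & _ & _ & HP).
  assert (H1 := pow_lt _ 2 (HP 1 Rlt_0_1)). rewrite PhiA_sqr in H1. nra.
Qed.

Lemma translatorA_coeffs s : inI a b s ->
  Derive th s * x s * Derive x s ^ 2 = 0 /\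
  Derive x s * Derive (Derive th) s - Derive th s * Derive (Derive x) s
  = - 2 * Derive th s ^ 3 * x s.
Proof.
  intros Hs. destruct (Hreg s Hs) as (_ & _ & _ & _ & HP).
  set (W := Derive x s * Derive (Derive th) s - Derive th s * Derive (Derive x) s).
  destruct (quadratic_coeffs_eq0 (2 * W + 4 * Derive th s ^ 3 * x s)
              (4 * Derive th s ^ 2 * x s * Derive x s) (2 * Derive th s * x s * Derive x s ^ 2))
    as (C2 & _ & C0).
  { intros t Ht. assert (E := Htr s t Hs Ht).
    rewrite translatorA_at_iff in E by auto. fold W in E. lra. }
  split; lra.
Qed.

Lemma Derive_th_mul_x_eq0 s : inI a b s -> Derive th s * x s = 0.
Proof.
  intros Hs. apply NNPP. intros Hn.
  destruct (Hreg s Hs) as (Hx & _ & _ & Ht2 & _).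
  (* Near s, th' x <> 0 makes x' vanish identically, so x' = x'' = 0 at s and the
     second coefficient identity gives th'^3 x = 0. *)
  assert (Hc : continuous (fun u => Derive th u * x u) s).
  { apply (ex_derive_continuous (K := R_AbsRing) (V := R_NormedModule)).
    now apply ex_derive_mult. }
  assert (Hloc : locally s (fun u => Derive x u = 0)).
  { generalize (filter_and _ _ (continuous_locally_neq0 _ s Hc Hn) (inI_locally a b s Hs)).
    apply filter_imp. intros u [Hnu Hu].
    destruct (translatorA_coeffs u Hu) as [C0 _].
    apply Rmult_integral in C0 as [C0 | C0]; [contradiction | nra]. }
  assert (X1 : Derive x s = 0) by exact (locally_singleton _ _ Hloc).
  assert (X2 : Derive (Derive x) s = 0) by exact (Derive_locally_const _ 0 s Hloc).
  destruct (translatorA_coeffs s Hs) as [_ C2]. rewrite X1, X2 in C2.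
  assert (Hp : Derive th s <> 0) by (intros E; apply Hn; rewrite E; ring).
  apply Hn, Rmult_eq_reg_l with (Derive th s ^ 2); [lra | now apply pow_nonzero].
Qed.

Lemma wronskianA_eq0 s : inI a b s ->
  Derive x s * Derive (Derive th) s - Derive th s * Derive (Derive x) s = 0.
Proof.
  intros Hs. destruct (translatorA_coeffs s Hs) as [_ C2]. rewrite C2.
  replace (-2 * Derive th s ^ 3 * x s) with (-2 * Derive th s ^ 2 * (Derive th s * x s)) by ring.
  rewrite Derive_th_mul_x_eq0 by exact Hs. ring.
Qed.

Lemma x_eq0_on s1 : inI a b s1 -> Derive th s1 <> 0 -> forall s, inI a b s -> x s = 0.
Proof.
  intros H1 Hp1 s Hs.
  assert (Hpar : Derive x s * Derive th s1 = Derive th s * Derive x s1).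
  { apply (wronskian0_parallel a b); auto. intros u Hu.
    destruct (Hreg u Hu) as (_ & Hx2 & _ & Ht2 & _).
    repeat split; auto using regularA_speed, wronskianA_eq0. }
  assert (Hp : Derive th s <> 0).
  { intros E. rewrite E, Rmult_0_l in Hpar.
    apply Rmult_integral in Hpar as [Hx' | Hx']; [| contradiction].
    assert (Hv := regularA_speed s Hs). rewrite Hx', E in Hv. lra. }
  apply Rmult_eq_reg_l with (Derive th s); [| exact Hp].
  rewrite Rmult_0_r. now apply Derive_th_mul_x_eq0.
Qed.
End TranslatorAClassification.

Lemma translatorA_classification a b x th :
  regularA a b x th -> translatorA a b x th ->
  (exists th0 : R, forall s, inI a b s -> th s = th0) \/ (forall s, inI a b s -> x s = 0).
Proof.
  intros Hreg Htr.
  destruct (const_or_Derive_neq0 a b th) as [Hconst | (s1 & H1 & Hp1)].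
  - intros s Hs. apply Hreg, Hs.
  - now left.
  - right. now apply (x_eq0_on a b x th Hreg Htr s1).
Qed.

Lemma translatorR_Derive_phi a b x y phi s :
  y s <> 0 -> inI a b s -> translatorR a b x y phi ->
  Derive phi s = - ((y s * cos (phi s) + x s * sin (phi s)) / y s).
Proof.
  intros Hy Hs Htr.
  assert (E : Derive phi s = 2 * (dot3 (NormalR phi s) (Vfield (x s) (y s)) - cos (phi s)))
    by (rewrite <- (Htr s 0 Hs); unfold HR; field).
  rewrite E. unfold dot3, NormalR, Vfield. field. exact Hy.
Qed.

Theorem mainTheorem3 :
  (* (1) N-invariant V-translators *)
  ( (* Sigma_{theta0} (any piece, any admissible parametrization) is a V-translator *)
    (forall (a b : Rbar) (y th : R -> R) (th0 : R),
        regularN a b y th -> (forall s, inI a b s -> th s = th0) ->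
        translatorN a b y th)
    /\
    (* the curves alpha(s) = (c(1 + cos(sqrt2 (s - s0))), s), (s-s0)/sqrt2 in (-pi/2, pi/2),
       generate V-translators *)
    (forall c s0 : R, 0 < c ->
        let a := Finite (s0 - PI / sqrt 2) in
        let b := Finite (s0 + PI / sqrt 2) in
        let y := fun s => c * (1 + cos (sqrt 2 * (s - s0))) in
        let th := fun s : R => s in
        regularN a b y th /\ translatorN a b y th)
    /\
    (* and these are the only ones *)
    (forall (a b : Rbar) (y th : R -> R),
        Rbar_lt a b -> regularN a b y th -> translatorN a b y th ->
        (exists th0 : R, forall s, inI a b s -> th s = th0)
        \/
        (exists c s0 : R, 0 < c /\
           forall s, inI a b s ->
             - (PI / 2) < (th s - s0) / sqrt 2 < PI / 2 /\
             y s = c * (1 + cos (sqrt 2 * (th s - s0))))) )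
  /\
  (* (2) A-invariant V-translators *)
  ( (forall (a b : Rbar) (x th : R -> R) (th0 : R),
        regularA a b x th -> (forall s, inI a b s -> th s = th0) ->
        translatorA a b x th)
    /\
    (forall (a b : Rbar) (x th : R -> R),
        regularA a b x th -> (forall s, inI a b s -> x s = 0) ->
        translatorA a b x th)
    /\
    (forall (a b : Rbar) (x th : R -> R),
        Rbar_lt a b -> regularA a b x th -> translatorA a b x th ->
        (exists th0 : R, forall s, inI a b s -> th s = th0)
        \/
        (forall s, inI a b s -> x s = 0)) )
  /\
  (* (3) rotational V-translators *)
  (forall (a b : Rbar) (x y phi : R -> R),
      (forall s, inI a b s ->
         ex_derive x s /\ ex_derive y s /\ ex_derive phi s /\ 0 < y s /\
         Derive x s = 2 * y s * cos (phi s) /\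
         Derive y s = 2 * y s * sin (phi s)) ->
      translatorR a b x y phi ->
      forall s, inI a b s ->
        Derive phi s = - ((y s * cos (phi s) + x s * sin (phi s)) / y s)).
Proof.
  refine (conj (conj theta_const_translatorN (conj model_curve_translatorN _))
            (conj (conj theta_const_translatorA (conj x_zero_translatorA _)) _)).
  - intros a b y th _. apply translatorN_classification.
  - intros a b x th _. apply translatorA_classification.
  - intros a b x y phi Hreg Htr s Hs.
    apply (translatorR_Derive_phi a b); auto.
    apply Rgt_not_eq, Hreg, Hs.
Qed.
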